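(* Let $u$ be a smooth real function on $\mathbb{R}$, let $L=\frac{\partial^2}{\partial x^2}+u(x)$, and let $G_n[u]$, $n\in\mathbb{N}$, be the KdV-hierarchy polynomials in the formal variables $u_0,u_1,u_2,\dots$, defined from the heat invariants of $L$ as described in the context. For $k\ge n\ge 1$, let $P_{kn}[u]$ be the polynomial obtained from $L^k\left[x^{2k-2n}\right]\big|_{x=0}$ (a polynomial in $u(0),u'(0),\dots,u^{(2k-2)}(0)$) by the formal change of variables $u^{(i)}(0)\to u_i$, $i=0,\dots,2k-2$. Then for every $n\in\mathbb{N}$, $$ G_n[u]=\sum_{m=n}^{2n}\sum_{k=n}^{m}\frac{(-1)^{n+k}\binom{m}{k}\binom{m}{n}\binom{2m}{m}}{2^{2m-2n+1}\binom{2m}{2n}\,(2k-2n)!}\,P_{kn}[u]. $$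
   Context: The heat kernel $H(t,x,y)$ of $L=\frac{\partial^2}{\partial x^2}+u(x)$ is the fundamental solution of the heat equation $\left(\frac{\partial}{\partial t}-L\right)f=0$. On the diagonal it has the asymptotic expansion, as $t\to 0+$, $$H(t,x,x)\sim \frac{1}{\sqrt{4\pi t}}\sum_{n=0}^{\infty} h_n[u]\,t^n,$$ where the heat invariants $h_n[u]$ are universal polynomials in $u(x)$ and its derivatives. Writing $u_i$ for the formal variable standing for $\partial^i u/\partial x^i$ (with $u_0=u$), one defines $G_n[u]=G_n[u_0,u_1,u_2,\dots]=\frac{(2n)!}{2\cdot n!}\,h_n[u]$ for $n\in\mathbb{N}$; the KdV hierarchy is $\frac{\partial u}{\partial t}=\frac{\partial}{\partial x}G_n[u]$. *)

From mathcomp Require Import all_boot all_order all_algebra.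
Set Implicit Arguments. Unset Strict Implicit. Unset Printing Implicit Defensive.
Import Order.TTheory GRing.Theory Num.Theory.
Local Open Scope ring_scope.

(* A "jet at a point" of a smooth function f : the sequence of its derivatives
   (f (x0), f'(x0), f''(x0), ...).  The formal variables u_i of the paper
   (standing for u^(i)) are an arbitrary sequence  u : nat -> R  in a field R
   of characteristic 0 (a numFieldType); an identity holding for every such
   R and every u is exactly an identity of polynomials in Q[u_0,u_1,...]. *)

Section KdV.
Variable R : numFieldType.

(* L = d^2/dx^2 + u acting on jets at 0 (Leibniz rule):
   (L f)^(j)(0) = f^(j+2)(0) + sum_{i<=j} C(j,i) u^(i)(0) f^(j-i)(0). *)
Definition Ljet (u : nat -> R) (f : nat -> R) : nat -> R :=
  fun j => f j.+2 + \sum_(i < j.+1) ('C(j, i))%:R * u i * f (j - i)%N.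

Definition xpow_jet (m : nat) : nat -> R :=
  fun j => if j == m then (m`!)%:R else 0.

Definition Pkn (u : nat -> R) (k n : nat) : R :=
  iter k (Ljet u) (xpow_jet (2 * k - 2 * n)) 0%N.

(* Hadamard / Minakshisundaram coefficients of the heat kernel:
   H(t,x,y) ~ (4 pi t)^(-1/2) e^{-(x-y)^2/4t} sum_n a_n(x,y) t^n with
   a_0 = 1,  (x-y) d_x a_n + n a_n = L_x a_(n-1).
   hadamard u n j = j-th Taylor coefficient of a_n(., y) in powers of (x-y),
   where u^(i)(y) = u i.  The recursion is the transport equation read
   coefficientwise:
   (n+j) c_{n,j} = (j+2)(j+1) c_{n-1,j+2} + sum_{i<=j} u_i/i! c_{n-1,j-i}. *)
Fixpoint hadamard (u : nat -> R) (n : nat) : nat -> R :=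
  match n with
  | 0 => fun j => if j == 0%N then 1 else 0
  | n'.+1 =>
      let c := hadamard u n' in
      fun j => (((j.+2 * j.+1)%N)%:R * c j.+2
                + \sum_(i < j.+1) u i / (i`!)%:R * c (j - i)%N)
               / ((n'.+1 + j)%N)%:R
  end.

Definition heat_invariant (u : nat -> R) (n : nat) : R := hadamard u n 0%N.

Definition Gn (u : nat -> R) (n : nat) : R :=
  ((2 * n)`!)%:R / (2 * (n`!)%:R) * heat_invariant u n.

End KdV.

From mathcomp Require Import all_boot all_order all_algebra.
From mathcomp Require Import ring zify.
Set Implicit Arguments. Unset Strict Implicit. Unset Printing Implicit Defensive.
Import Order.TTheory GRing.Theory Num.Theory.
Local Open Scope ring_scope.

(** Averaging a polynomial [p] against the heat kernel of [L] and expanding in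
    [t] gives, from the Hadamard expansion [H ~ (4 pi t)^(-1/2) e^(-y^2/4t)
    sum_n a_n t^n] and the Gaussian moments [(2m)!/m! t^m], the algebraic
    identity [L^K[p](0) = K! sum_(n+m=K) (2m)!/m! [y^(2m)] (a_n p)], which
    follows from the transport equation alone.  For [p = x^(2k-2n)] it expresses
    [P_kn] through the Taylor coefficients [[x^(2(n-n'))] a_n'], [n' <= n],
    with weights [k! (2(k-n'))!/(k-n')!].  The stated coefficients invert this
    triangular system: substituting [m = n+b], [k = n+a], their weighted sums
    factor into [(1/2)_b / b!] times alternating binomial sums of rising
    factorials, which collapse to the Kronecker delta [n' = n], leaving
    [h_n = a_n(0)]. *)

Lemma big_nat_offset (T : Type) (idx : T) (op : T -> T -> T) (F : nat -> T) a c :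
  \big[op/idx]_(a <= i < a + c) F i = \big[op/idx]_(i < c) F (a + i).
Proof.
rewrite -{1}[a]add0n big_addn addKn big_mkord.
by apply: eq_bigr => i _; rewrite addnC.
Qed.

Lemma sum_mulrn_shift (V : nmodType) (F : nat -> V) K :
  \sum_(n < K.+1) (F n *+ (K.+1 - n) + F n.+1 *+ n.+1) = \sum_(n < K.+2) F n *+ K.+1.
Proof.
rewrite big_split /=.
have -> : \sum_(n < K.+1) F n *+ (K.+1 - n) = \sum_(n < K.+2) F n *+ (K.+1 - n).
  by rewrite [RHS]big_ord_recr /= subnn mulr0n addr0.
have -> : \sum_(n < K.+1) F n.+1 *+ n.+1 = \sum_(n < K.+2) F n *+ n.
  by rewrite [RHS]big_ord_recl /= mulr0n add0r.
by rewrite -big_split /=; apply: eq_bigr => n _; rewrite -mulrnDr subnK // -ltnS.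
Qed.

Section RisingFactorial.
Variable R : comNzRingType.

Definition rising (x : R) (l : nat) : R := \prod_(i < l) (x + i%:R).

Lemma rising0 x : rising x 0 = 1.
Proof. by rewrite /rising big_ord0. Qed.

Lemma risingSr x l : rising x l.+1 = rising x l * (x + l%:R).
Proof. by rewrite /rising big_ord_recr. Qed.

Lemma risingSl x l : rising x l.+1 = x * rising (x + 1) l.
Proof.
rewrite /rising big_ord_recl addr0; congr (_ * _).
by apply: eq_bigr => i _; rewrite /bump /= -natr1 addrAC addrA.
Qed.

Lemma risingD x b c : rising x (b + c) = rising x b * rising (x + b%:R) c.
Proof.
elim: c => [|c IH]; first by rewrite addn0 rising0 mulr1.
by rewrite addnS !risingSr IH natrD mulrA addrA.
Qed.

Lemma rising_diff x l : rising (x + 1) l.+1 - rising x l.+1 = l.+1%:R * rising (x + 1) l.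
Proof. by rewrite risingSr risingSl -natr1; ring. Qed.

Definition alt_binom_sum (b : nat) (f : nat -> R) : R :=
  \sum_(a < b.+1) (-1) ^+ a * ('C(b, a))%:R * f a.

Lemma alt_binom_sumS b f :
  alt_binom_sum b.+1 f = alt_binom_sum b f - alt_binom_sum b (fun a => f a.+1).
Proof.
rewrite /alt_binom_sum.
have -> : \sum_(a < b.+1) (-1) ^+ a * ('C(b, a))%:R * f a
        = \sum_(a < b.+2) (-1) ^+ a * ('C(b, a))%:R * f a.
  by rewrite [RHS]big_ord_recr /= bin_small // mulr0 mul0r addr0.
rewrite big_ord_recl [in RHS]big_ord_recl /= !bin0 -addrA; congr (_ + _).
by rewrite -sumrB; apply: eq_bigr => a _; rewrite /bump /= binS natrD exprS; ring.
Qed.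

(* Up to sign, the [b]-th finite difference of [s |-> rising s l]; the falling
   factorial [l ^_ b] vanishes for [b > l]. *)
Lemma alt_binom_sum_rising b l s :
  alt_binom_sum b (fun a => rising (a%:R + s) l)
  = (-1) ^+ b * (l ^_ b)%:R * rising (s + b%:R) (l - b).
Proof.
elim: b l s => [|b IH] l s.
  by rewrite /alt_binom_sum big_ord1 bin0 ffactn0 subn0 addr0 add0r !mulr1 mul1r.
have shift_s l' : alt_binom_sum b (fun a => rising (a.+1%:R + s) l')
                = alt_binom_sum b (fun a => rising (a%:R + (s + 1)) l').
  by apply: eq_bigr => a _; rewrite -natr1 addrAC addrA.
rewrite alt_binom_sumS shift_s; case: l => [|l].
  by rewrite !IH !rising0 subrr ffact0n mulr0 mul0r.
have -> : alt_binom_sum b (fun a => rising (a%:R + s) l.+1)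
        - alt_binom_sum b (fun a => rising (a%:R + (s + 1)) l.+1)
        = - (l.+1%:R * alt_binom_sum b (fun a => rising (a%:R + (s + 1)) l)).
  rewrite /alt_binom_sum -sumrB mulr_sumr -sumrN; apply: eq_bigr => a _.
  rewrite -mulrBr [a%:R + (s + 1)]addrA -opprB rising_diff; ring.
by rewrite IH ffactSS natrM subSS exprS (addrAC s) -addrA natr1; ring.
Qed.

End RisingFactorial.

Section CharZero.
Variable R : numFieldType.

Lemma natf_fact_neq0 n : (n`!)%:R != 0 :> R.
Proof. by rewrite pnatr_eq0 -lt0n fact_gt0. Qed.

Lemma natf_binE l b : (b <= l)%N ->
  ('C(l, b))%:R = (l`!)%:R / ((b`!)%:R * ((l - b)`!)%:R) :> R.
Proof.
by move=> bl; rewrite -(bin_fact bl) !natrM mulfK // mulf_neq0 ?natf_fact_neq0.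
Qed.

Lemma sum_alt_binom n l : (l <= n)%N ->
  \sum_(b < n.+1) (-1) ^+ b * ('C(l, b))%:R = (l == 0%N)%:R :> R.
Proof.
move=> ln; rewrite -[RHS]expr0n -[0 in RHS](subrr (1 : R)) exprBn.
under [RHS]eq_bigr => b _ do rewrite !expr1n !mulr1 -mulr_natr.
rewrite (big_ord_widen n.+1 (fun b => (-1) ^+ b * ('C(l, b))%:R) (ln : (l < n.+1)%N)).
rewrite [RHS]big_mkcond /=; apply: eq_bigr => b _.
by case: ltnP => // lb; rewrite bin_small // mulr0.
Qed.

Lemma sum_rising_alt_binom n l s : (l <= n)%N ->
  \sum_(b < n.+1) rising s b / (b`!)%:R * alt_binom_sum b (fun a => rising (a%:R + s) l)
  = (l == 0%N)%:R :> R.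
Proof.
move=> ln; have -> : (l == 0%N)%:R = rising s l * (l == 0%N)%:R :> R.
  by case: l {ln} => [|l]; rewrite ?rising0 ?mul1r ?mulr0.
rewrite -(sum_alt_binom ln) mulr_sumr; apply: eq_bigr => b _.
rewrite alt_binom_sum_rising; case: (leqP b l) => [bl|lb]; last first.
  by rewrite ffact_small // bin_small // !(mulr0, mul0r).
have -> : rising s l = rising s b * rising (s + b%:R) (l - b) by rewrite -risingD subnKC.
by rewrite -bin_ffact natrM; field; rewrite natf_fact_neq0.
Qed.

Definition gauss_moment (m : nat) : R := ((2 * m)`!)%:R / (m`!)%:R.

Lemma gauss_moment0 : gauss_moment 0 = 1.
Proof. by rewrite /gauss_moment muln0 divr1. Qed.

Lemma gauss_momentS m : gauss_moment m.+1 = gauss_moment m * (4 * (m%:R + 2^-1)).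
Proof.
rewrite /gauss_moment mulnS add2n !factS !natrM -!natr1 mulrnA.
by field; rewrite natf_fact_neq0 natr1 pnatr_eq0.
Qed.

Lemma gauss_momentD a l :
  gauss_moment (a + l) = gauss_moment a * 4 ^+ l * rising (a%:R + 2^-1) l.
Proof.
elim: l => [|l IH]; first by rewrite addn0 rising0 !mulr1.
by rewrite addnS gauss_momentS IH risingSr natrD exprS; ring.
Qed.

Lemma gauss_momentE b : gauss_moment b = 4 ^+ b * rising 2^-1 b.
Proof.
have := gauss_momentD 0 b; rewrite add0n add0r => ->.
by rewrite gauss_moment0 mul1r.
Qed.

Definition kdv_coef (n m k : nat) : R :=
  (-1) ^+ (n + k) * ('C(m, k))%:R * ('C(m, n))%:R * ('C(2 * m, m))%:R
  / (2 ^+ (2 * m - 2 * n + 1) * ('C(2 * m, 2 * n))%:R * ((2 * k - 2 * n)`!)%:R).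

Lemma kdv_coef_shift n a b l : (a <= b)%N ->
  kdv_coef n (n + b) (n + a) * (((n + a)`!)%:R * gauss_moment (a + l))
  = ((2 * n)`!)%:R / (2 * (n`!)%:R) * 4 ^+ l
    * (rising 2^-1 b / (b`!)%:R * ((-1) ^+ a * ('C(b, a))%:R * rising (a%:R + 2^-1) l)).
Proof.
move=> ab; rewrite /kdv_coef gauss_momentD.
have -> : rising 2^-1 b = gauss_moment b / 4 ^+ b.
  by rewrite gauss_momentE mulrC mulKf // expf_neq0 // pnatr_eq0.
have -> : (-1) ^+ (n + (n + a)) = (-1) ^+ a :> R.
  by rewrite addnA addnn -mul2n exprD exprM sqrrN !expr1n mul1r.
have -> : (2 * (n + b) - 2 * n + 1 = (2 * b).+1)%N by lia.
have -> : (2 * (n + a) - 2 * n = 2 * a)%N by lia.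
have -> : 2 ^+ (2 * b).+1 = 2 * 4 ^+ b :> R.
  by rewrite exprS exprM; congr (_ * _ ^+ _); ring.
rewrite natf_binE ?leq_add2l // subnDl natf_binE ?leq_addr // addKn.
rewrite natf_binE ?leq_pmul2l ?leq_addr // natf_binE ?leq_pmul2l ?leq_addr //.
have -> : (2 * (n + b) - (n + b) = n + b)%N by lia.
have -> : (2 * (n + b) - 2 * n = 2 * b)%N by lia.
rewrite natf_binE // /gauss_moment.
by field; rewrite !natf_fact_neq0 expf_neq0 ?pnatr_eq0.
Qed.

Lemma kdv_coef_kronecker n n' : (n' <= n)%N ->
  \sum_(n <= m < (2 * n).+1) \sum_(n <= k < m.+1)
     kdv_coef n m k * ((k`!)%:R * gauss_moment (k - n'))
  = (n' == n)%:R * (((2 * n)`!)%:R / (2 * (n`!)%:R)).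
Proof.
move=> n'n; have ln := leq_subr n' n; rewrite -(subKn n'n).
move: ln; move: (n - n')%N => l ln {n'n}.
transitivity (((2 * n)`!)%:R / (2 * (n`!)%:R) * 4 ^+ l * \sum_(b < n.+1)
  rising 2^-1 b / (b`!)%:R * alt_binom_sum b (fun a => rising (a%:R + 2^-1) l) : R).
  rewrite mulr_sumr (_ : (2 * n).+1 = n + n.+1)%N; last by lia.
  rewrite big_nat_offset; apply: eq_bigr => b _.
  rewrite -addnS big_nat_offset /alt_binom_sum !mulr_sumr; apply: eq_bigr => a _.
  have -> : (n + a - (n - l) = a + l)%N by lia.
  by rewrite kdv_coef_shift // -ltnS.
rewrite sum_rising_alt_binom // (_ : (n - l == n)%N = (l == 0)%N); last by lia.
by case: l {ln} => [|l]; rewrite /= ?expr0 ?mulr1 ?mulr0 ?mul0r ?mul1r.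
Qed.

(* [t^m]-coefficient of the average of [g] against the heat kernel
   (4 pi t)^(-1/2) exp (- y^2 / 4t), whose moments are [gauss_moment m * t^m]. *)
Definition heat_moment (m : nat) (g : {poly R}) : R := g`_(2 * m) * gauss_moment m.

Lemma heat_momentD m f g : heat_moment m (f + g) = heat_moment m f + heat_moment m g.
Proof. by rewrite /heat_moment coefD mulrDl. Qed.

Lemma heat_momentN m f : heat_moment m (- f) = - heat_moment m f.
Proof. by rewrite /heat_moment coefN mulNr. Qed.

Lemma heat_momentMn m f k : heat_moment m (f *+ k) = heat_moment m f *+ k.
Proof. by rewrite /heat_moment coefMn mulrnAl. Qed.

Lemma heat_moment_deriv2 m g : heat_moment m g^`()^`() = heat_moment m.+1 g *+ m.+1.
Proof.
rewrite /heat_moment (_ : 2 * m.+1 = (2 * m).+2)%N; last by rewrite mulnS.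
by rewrite gauss_momentS !coef_deriv; field.
Qed.

Lemma heat_moment_mulX m g : heat_moment m.+1 ('X * g) = heat_moment m g^`() *+ 2.
Proof.
rewrite /heat_moment (_ : 2 * m.+1 = (2 * m).+2)%N; last by rewrite mulnS.
by rewrite gauss_momentS coefXM coef_deriv /=; field.
Qed.

Lemma heat_moment0_mulX g : heat_moment 0 ('X * g) = 0.
Proof. by rewrite /heat_moment coefXM /= !mul0r. Qed.

Lemma heat_moment_mulXn m j g : heat_moment m (g * 'X^(2 * j)) =
  if (j <= m)%N then g`_(2 * (m - j)) * gauss_moment m else 0.
Proof.
rewrite /heat_moment coefMXn ltn_pmul2l // ltnNge mulnBr.
by case: (j <= m)%N; rewrite ?mul0r.
Qed.

Section HeatPolynomials.
Variables (u : nat -> R) (N : nat).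

(* Jets are encoded by Taylor polynomials; [u] is truncated at degree [N], so
   everything below is exact only in degrees that do not see the truncation. *)
Definition taylor_u : {poly R} := \poly_(i < N) (u i / (i`!)%:R).

Definition Lpoly (p : {poly R}) : {poly R} := p^`()^`() + taylor_u * p.

Fixpoint hadamard_poly (n : nat) : {poly R} :=
  if n is n'.+1 then
    let q := Lpoly (hadamard_poly n') in \poly_(j < size q) (q`_j / (n'.+1 + j)%:R)
  else 1.
Arguments hadamard_poly : simpl never.

Lemma hadamard_poly0 : hadamard_poly 0 = 1.
Proof. by []. Qed.

Lemma coef_taylor_u i : (i < N)%N -> taylor_u`_i = u i / (i`!)%:R.
Proof. by move=> iN; rewrite coef_poly iN. Qed.

Lemma coef_Lpoly p j : (Lpoly p)`_j =
  p`_j.+2 * ((j.+2 * j.+1)%N)%:R + \sum_(i < j.+1) taylor_u`_i * p`_(j - i).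
Proof. by rewrite coefD coefM !coef_deriv -mulrnA mulr_natr. Qed.

Lemma coef_hadamard_polyS n j :
  (hadamard_poly n.+1)`_j = (Lpoly (hadamard_poly n))`_j / (n.+1 + j)%:R.
Proof.
rewrite /= coef_poly; case: ltnP => // size_le.
by rewrite nth_default // mul0r.
Qed.

Lemma hadamard_polyE n j : (j + 2 * n <= N)%N -> hadamard u n j = (hadamard_poly n)`_j.
Proof.
elim: n j => [|n IH] j jN; first by rewrite /= coef1; case: (j == 0%N).
rewrite coef_hadamard_polyS coef_Lpoly /= IH; last by lia.
rewrite [_`_j.+2 * _]mulrC; congr ((_ + _) / _); apply: eq_bigr => i _.
by rewrite IH ?coef_taylor_u //; have := ltn_ord i; lia.
Qed.

(* The transport equation [(x d/dx + n + 1) a_(n+1) = L a_n]. *)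
Lemma Lpoly_hadamard_poly n :
  Lpoly (hadamard_poly n) = hadamard_poly n.+1 *+ n.+1 + 'X * (hadamard_poly n.+1)^`().
Proof.
apply/polyP => j; rewrite [in RHS]coefD coefMn coefXM coef_hadamard_polyS.
case: j => [|j] /=.
  by rewrite addr0 addn0 -[_ *+ n.+1]mulr_natr divfK // pnatr_eq0.
rewrite coef_deriv coef_hadamard_polyS -mulrnDr.
by rewrite -[_ *+ (n.+1 + j.+1)]mulr_natr divfK // pnatr_eq0.
Qed.

Lemma iter_Ljet k (f : nat -> R) (p : {poly R}) :
  (forall j, f j = p`_j * (j`!)%:R) ->
  forall j, (j + 2 * k <= N)%N -> iter k (Ljet u) f j = (iter k Lpoly p)`_j * (j`!)%:R.
Proof.
move=> fE; elim: k => [|k IH] j jN /=; first exact: fE.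
rewrite {1}/Ljet coef_Lpoly IH; last by lia.
rewrite mulrDl mulr_suml; congr (_ + _); first by rewrite !factS !natrM; ring.
apply: eq_bigr => i _; have ij : (i <= j)%N by rewrite -ltnS.
rewrite IH ?coef_taylor_u ?natf_binE //; try lia.
by field; rewrite !natf_fact_neq0.
Qed.

Lemma mulr_Lpoly (c p : {poly R}) :
  c * Lpoly p = (c * p)^`()^`() - (c^`() * p)^`() *+ 2 + Lpoly c * p.
Proof. by rewrite /Lpoly !derivM derivD !derivM; ring. Qed.

(* The [t^K]-coefficient of the heat semigroup applied to [p], evaluated at 0. *)
Definition heat_pairing (K : nat) (p : {poly R}) : R :=
  \sum_(n < K.+1) heat_moment (K - n) (hadamard_poly n * p).

Lemma heat_pairing_Lpoly K p : heat_pairing K (Lpoly p) = K.+1%:R * heat_pairing K.+1 p.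
Proof.
pose A n := heat_moment (K.+1 - n) (hadamard_poly n * p).
pose B n := heat_moment (K.+1 - n) ('X * ((hadamard_poly n)^`() * p)).
have splitE (n : 'I_K.+1) : heat_moment (K - n) (hadamard_poly n * Lpoly p)
    = A n *+ (K.+1 - n) + A n.+1 *+ n.+1 + (B n.+1 - B n).
  have nK : (n <= K)%N by rewrite -ltnS.
  rewrite /A /B mulr_Lpoly Lpoly_hadamard_poly mulrDl mulrnAl -mulrA.
  rewrite !heat_momentD heat_momentN !heat_momentMn heat_moment_deriv2 subSS.
  by rewrite (subSn nK) heat_moment_mulX; ring.
rewrite /heat_pairing (eq_bigr _ (fun n _ => splitE n)) big_split /= sum_mulrn_shift.
rewrite -(big_mkord xpredT (fun n => B n.+1 - B n)) telescope_sumr //.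
have -> : B 0%N = 0.
  by rewrite /B hadamard_poly0 -polyC1 derivC !mul0r mulr0 /heat_moment coef0 mul0r.
rewrite /B subnn heat_moment0_mulX subr0 addr0 mulr_sumr.
by apply: eq_bigr => n _; rewrite mulr_natl.
Qed.

Lemma iter_Lpoly_coef0 K p : (iter K Lpoly p)`_0 = (K`!)%:R * heat_pairing K p.
Proof.
elim: K p => [|K IH] p.
  rewrite /heat_pairing big_ord1 /heat_moment hadamard_poly0 mul1r gauss_moment0.
  by rewrite !mulr1 mul1r.
by rewrite iterSr IH heat_pairing_Lpoly factS natrM mulrCA mulrA.
Qed.

Lemma Pkn_heat_pairing k n : (2 * k <= N)%N ->
  Pkn u k n = (k`!)%:R * heat_pairing k 'X^(2 * k - 2 * n).
Proof.
move=> kN; rewrite /Pkn (@iter_Ljet k _ 'X^(2 * k - 2 * n)) ?add0n //.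
  by rewrite iter_Lpoly_coef0 mulr1.
by move=> j; rewrite /xpow_jet coefXn; case: eqP => [->|]; rewrite ?mul1r ?mul0r.
Qed.

End HeatPolynomials.

Lemma Pkn_hadamard (u : nat -> R) k n : (n <= k)%N ->
  Pkn u k n
  = (k`!)%:R * \sum_(n' < n.+1) hadamard u n' (2 * (n - n')) * gauss_moment (k - n').
Proof.
move=> nk; rewrite (@Pkn_heat_pairing u (2 * k)) //; congr (_ * _).
rewrite (big_ord_widen k.+1 (fun n' => hadamard u n' (2 * (n - n')) * gauss_moment (k - n'))
  (nk : (n < k.+1)%N)) [RHS]big_mkcond /=.
apply: eq_bigr => n' _; have n'k : (n' <= k)%N by rewrite -ltnS.
rewrite -mulnBr heat_moment_mulXn (_ : (k - n <= k - n')%N = (n' < n.+1)%N); last by lia.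
case: ifP => // n'n; rewrite (_ : (k - n' - (k - n))%N = (n - n')%N); last by lia.
by rewrite (@hadamard_polyE u (2 * k)) //; lia.
Qed.

End CharZero.

Theorem theorem1p1 (R : numFieldType) (u : nat -> R) (n : nat) (hn : (1 <= n)%N) :
  Gn u n =
  \sum_(n <= m < (2 * n).+1) \sum_(n <= k < m.+1)
    ((-1) ^+ (n + k) * ('C(m, k))%:R * ('C(m, n))%:R * ('C(2 * m, m))%:R
     / (2 ^+ (2 * m - 2 * n + 1) * ('C(2 * m, 2 * n))%:R * ((2 * k - 2 * n)`!)%:R))
    * Pkn u k n.
Proof.
pose h n' := hadamard u n' (2 * (n - n')).
transitivity (\sum_(n' < n.+1) h n' * \sum_(n <= m < (2 * n).+1) \sum_(n <= k < m.+1)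
                 kdv_coef R n m k * ((k`!)%:R * gauss_moment R (k - n'))).
  rewrite big_ord_recr /= kdv_coef_kronecker // eqxx mul1r big1 ?add0r => [|n' _].
    by rewrite /h subnn muln0 /Gn /heat_invariant mulrC.
  have n'n := ltn_ord n'.
  by rewrite kdv_coef_kronecker ?(ltnW n'n) // (ltn_eqF n'n) mul0r mulr0.
under eq_bigr => n' _ do rewrite mulr_sumr.
rewrite exchange_big; apply: eq_big_nat => m _; under eq_bigr => n' _ do rewrite mulr_sumr.
rewrite exchange_big; apply: eq_big_nat => k /andP[nk _].
rewrite -/(kdv_coef R n m k) Pkn_hadamard // !mulr_sumr.
by apply: eq_bigr => n' _; rewrite /h; ring.
Qed.
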